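(* Let $n\ge 5$ be odd and let $x,y$ be adjacent vertices of $Q_n$ with $f_n(x)+f_n(y)=\operatorname{str}_{f_n}(Q_n)$. If $x$ and $y$ both begin with the bit $1$, then $$\operatorname{str}_{f_n}(Q_n)\le \operatorname{str}_{f_{n-2}}(Q_{n-2})+3\cdot 2^{n-2}+\binom{n-3}{\lceil (n-3)/2\rceil}+\binom{n-2}{\lceil (n-2)/2\rceil}.$$
   Context: $Q_n$ is the $n$-dimensional hypercube: vertices are the $n$-bit strings, adjacent iff they differ in exactly one position. For a bijection $f:V(G)\to\{1,\dots,|V(G)|\}$, $\operatorname{str}_f(G)=\max\{f(u)+f(v):uv\in E(G)\}$. An $n$-bit string is $x_1\cdots x_n$, $x_i\in\{0,1\}$; its weight is its number of $1$s. Lexicographic order: $x<y$ if for some $k$, $x_j=y_j$ for $j<k$ and $x_k<y_k$. $S_n^i$ is the sequence of $n$-bit strings of weight $i$ in increasing lexicographic order; $R_n^i$ is the same set in decreasing lexicographic order. $S_n$ is the concatenation $(R_n^1,R_n^3,\dots,R_n^{n-1},S_n^n,S_n^{n-2},\dots,S_n^2,S_n^0)$ for even $n$ and $(R_n^1,R_n^3,\dots,R_n^{n-2},R_n^n,S_n^{n-1},\dots,S_n^2,S_n^0)$ for odd $n$; $f_n$ maps the string in position $j$ of $S_n$ to $j$. *)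

From mathcomp Require Import all_boot.
Set Implicit Arguments. Unset Strict Implicit. Unset Printing Implicit Defensive.

(* n-bit strings are represented as [seq bool] of size n (x_1 is the head). *)

Fixpoint bitstrings (n : nat) : seq (seq bool) :=
  if n is n'.+1 then
    [seq false :: s | s <- bitstrings n'] ++ [seq true :: s | s <- bitstrings n']
  else [:: [::]].

Definition weight (x : seq bool) : nat := count id x.

Definition hc_adj (x y : seq bool) : bool :=
  (size x == size y) && (count id [seq p.1 != p.2 | p <- zip x y] == 1).

Fixpoint lex_lt (x y : seq bool) : bool :=
  match x, y with
  | a :: x', b :: y' => (a < b) || ((a == b) && lex_lt x' y')
  | _, _ => false
  end.

Definition lex_le (x y : seq bool) : bool := (x == y) || lex_lt x y.

Definition Sni (n i : nat) : seq (seq bool) :=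
  sort lex_le [seq x <- bitstrings n | weight x == i].
Definition Rni (n i : nat) : seq (seq bool) := rev (Sni n i).

(* For even n this is (R^1,...,R^{n-1},S^n,...,S^0); for odd n it is
   (R^1,...,R^{n-2},R^n,S^{n-1},...,S^0). *)
Definition Sseq (n : nat) : seq (seq bool) :=
  flatten [seq Rni n i | i <- iota 0 n.+1 & odd i] ++
  flatten [seq Sni n i | i <- rev (iota 0 n.+1) & ~~ odd i].

Definition fn (n : nat) (x : seq bool) : nat := (index x (Sseq n)).+1.

Definition strength (V : seq (seq bool)) (adj : rel (seq bool))
  (f : seq bool -> nat) : nat :=
  \max_(u <- V) \max_(v <- V | adj u v) (f u + f v).

Definition str_Q (n : nat) : nat := strength (bitstrings n) hc_adj (fn n).

From mathcomp Require Import all_boot ssralg ssrnum ssrint zify.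
Import GRing.Theory Num.Theory.
Set Implicit Arguments. Unset Strict Implicit. Unset Printing Implicit Defensive.

(* Whether y precedes x in S_n depends only on the weights of x and y and on
   their lexicographic comparison, so the number of predecessors of x,
   f_n(x) - 1, decomposes along the first bits of x.  For x = 11z the
   predecessors are those of z plus a count over weight classes; for x = 10z
   they are those of z' plus such a count, where z' is z with its first bit
   flipped (the predecessor counts of 0u and 1u add up to 2^m - 1).  Writing
   x = 1a z and y = 1b w, in each of the four cases the two remaining strings
   are adjacent in Q_{n-2}, so their part is bounded by str_{f_{n-2}}(Q_{n-2}).
   The two weight-class counts add up to 3 * 2^(n-2) plus alternating
   binomial sums, which collapse through
   sum_{v <= k} (-1)^v C(m+1, v) = (-1)^k C(m, k)
   to at most one binomial coefficient of each of Q_{n-3} and Q_{n-2}, and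
   those are bounded by the central ones. *)

Lemma lex_lt_irr x : lex_lt x x = false.
Proof. by elim: x => //= a x ->; rewrite ltnn eqxx. Qed.

Lemma lex_lt_trans x y z : lex_lt x y -> lex_lt y z -> lex_lt x z.
Proof.
elim: x y z => [|a x IH] [|b y] [|c z] //=.
by case: a; case: b; case: c => //=; apply: IH.
Qed.

Lemma lex_lt_asym x y : lex_lt x y -> ~~ lex_lt y x.
Proof.
by move=> h; apply/negP => h2; move: (lex_lt_trans h h2); rewrite lex_lt_irr.
Qed.

Lemma lex_lt_total x y : size x = size y -> x != y -> lex_lt x y || lex_lt y x.
Proof.
elim: x y => [|a x IH] [|b y] //= [] /IH {}IH.
by case: a; case: b => //=; rewrite eqseq_cons /=.
Qed.

Lemma lex_le_trans : transitive lex_le.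
Proof.
move=> y x z; rewrite /lex_le => /orP[/eqP->//|h1] /orP[/eqP<-|h2].
  by rewrite h1 orbT.
by rewrite (lex_lt_trans h1 h2) orbT.
Qed.

Lemma mem_bitstrings N y : (y \in bitstrings N) = (size y == N).
Proof.
elim: N y => [|N IH] [|b y] //=; rewrite mem_cat.
  by apply/negP; case/orP => /mapP [? _].
apply/idP/idP.
- by case/orP => /mapP [u hu [_ ->]]; rewrite IH in hu.
- rewrite eqSS => h; case: b; apply/orP; [right|left];
  by apply/mapP; exists y => //; rewrite IH.
Qed.

Lemma uniq_bitstrings N : uniq (bitstrings N).
Proof.
elim: N => //= N IH; rewrite cat_uniq !map_inj_uniq ?IH //=; try by move=> ?? [].
rewrite andbT; apply/hasPn => z /mapP [u _ ->]; apply/negP => /mapP [v _] //.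
Qed.

Lemma size_bitstrings N : size (bitstrings N) = 2 ^ N.
Proof. by elim: N => //= N IH; rewrite size_cat !size_map IH expnS mul2n addnn. Qed.

Lemma count_bitstringsS (P : pred (seq bool)) N :
  count P (bitstrings N.+1) =
  count (fun y => P (false :: y)) (bitstrings N) +
  count (fun y => P (true :: y)) (bitstrings N).
Proof. by rewrite /= count_cat !count_map. Qed.

Lemma weight_cons b y : weight (b :: y) = b + weight y.
Proof. by []. Qed.

(** * The order of S_n *)

(* [precw wy wx lt_yx lt_xy]: whether a string of weight wy precedes one of
   weight wx in S_n, given the two lexicographic comparisons. *)
Definition precw (wy wx : nat) (lt_yx lt_xy : bool) : bool :=
  if odd wy != odd wx then odd wy
  else if odd wy then (wy < wx) || ((wy == wx) && lt_xy)
  else (wx < wy) || ((wy == wx) && lt_yx).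

Definition prec (y x : seq bool) : bool :=
  precw (weight y) (weight x) (lex_lt y x) (lex_lt x y).

Lemma prec_irr x : prec x x = false.
Proof. by rewrite /prec /precw lex_lt_irr eqxx ltnn /= !andbF; case: odd. Qed.

Lemma prec_asym y x : prec y x -> ~~ prec x y.
Proof.
rewrite /prec /precw.
have [a1 a2] := (@lex_lt_asym y x, @lex_lt_asym x y).
case: (odd (weight y)); case: (odd (weight x)) => //=;
case: ltngtP => //= h; rewrite ?h ?eqxx ?ltnn //= ; by [move/a2|move/a1].
Qed.

Lemma prec_total y x : size y = size x -> y != x -> prec y x || prec x y.
Proof.
move=> hs hne; have := lex_lt_total hs hne; rewrite /prec /precw.
case: (odd (weight y)); case: (odd (weight x)) => //=;
case: ltngtP => //= h; rewrite ?h ?eqxx ?ltnn ?orbT //=; by rewrite orbC.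
Qed.

(* Adding a leading 1 to both strings changes both weight parities, which
   reverses the order. *)
Lemma precwSS wy wx a b : precw wy.+1 wx.+1 a b = precw wx wy b a.
Proof.
rewrite /precw /= ltnS eqSS (eq_sym wx).
by case: (odd wy); case: (odd wx).
Qed.

Lemma prec_true_true y x : prec (true :: y) (true :: x) = prec x y.
Proof. by rewrite /prec !weight_cons /= !add1n precwSS. Qed.

Lemma prec_false_false y x : prec (false :: y) (false :: x) = prec y x.
Proof. by []. Qed.

Lemma prec_false_true y x :
  prec (false :: y) (true :: x) = precw (weight y) (weight x).+1 true false.
Proof. by []. Qed.

Lemma prec_true_false y x :
  prec (true :: y) (false :: x) = precw (weight y).+1 (weight x) false true.
Proof. by []. Qed.

Lemma index_pairwise (T : eqType) (r : rel T) s x :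
  irreflexive r -> (forall a b, r a b -> ~~ r b a) ->
  pairwise r s -> x \in s -> index x s = count (r^~ x) s.
Proof.
move=> irr asy; elim: s => //= a s IH /andP[hall hpw].
rewrite inE; case: (eqVneq a x) => [<-|ne] /= => [_|xs].
  rewrite ?eqxx irr /=; symmetry; apply/eqP; rewrite -leqn0 leqNgt -has_count.
  by apply/hasPn => y ys; apply: asy; move/allP: hall; apply.
rewrite ?(negbTE ne).
have -> : r a x by move/allP: hall; apply.
by rewrite IH.
Qed.

Lemma pairwise_rev (T : Type) (r : rel T) s :
  pairwise r (rev s) = pairwise (fun x y => r y x) s.
Proof. by elim: s => //= a s IH; rewrite rev_cons pairwise_rcons IH all_rev. Qed.

Lemma pairwise_flatten_map (T : Type) (I : eqType) (r : rel T) (F : I -> seq T) (L : seq I) :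
  (forall i, i \in L -> pairwise r (F i)) ->
  pairwise (fun i j => allrel r (F i) (F j)) L -> pairwise r (flatten (map F L)).
Proof.
elim: L => //= i L IH hF /andP[hall hpw].
have hFL j : j \in L -> pairwise r (F j) by move=> jL; apply: hF; rewrite inE jL orbT.
rewrite pairwise_cat hF ?mem_head // IH // andbT.
elim: L {IH hF hFL hpw} hall => [|j L IHL] /=; first by rewrite allrel0r.
by case/andP=> hij /IHL; rewrite allrel_catr hij.
Qed.

Lemma mem_Sni n i x : (x \in Sni n i) = (size x == n) && (weight x == i).
Proof. by rewrite /Sni mem_sort mem_filter mem_bitstrings andbC. Qed.

Lemma mem_Rni n i x : (x \in Rni n i) = (size x == n) && (weight x == i).
Proof. by rewrite /Rni mem_rev mem_Sni. Qed.

Lemma lex_lt_pairwise_Sni n i : pairwise lex_lt (Sni n i).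
Proof.
have hs : sorted lex_le (Sni n i).
  apply: (@sort_sorted_in _ (fun x : seq bool => size x == n)).
    move=> a b /eqP ha /eqP hb; rewrite /lex_le.
    case: (eqVneq a b) => [->|ne]; first by rewrite ?eqxx.
    by rewrite /=; apply: lex_lt_total => //; rewrite ha hb.
  by apply/allP => y; rewrite mem_filter mem_bitstrings => /andP[].
rewrite sorted_pairwise in hs; last exact: lex_le_trans.
have hu : uniq (Sni n i) by rewrite sort_uniq filter_uniq // uniq_bitstrings.
rewrite uniq_pairwise in hu.
have := conj hs hu; move/andP; rewrite -pairwise_relI.
apply: sub_pairwise => a b /andP[]; rewrite /lex_le /= => /orP[/eqP->|//].
by rewrite eqxx.
Qed.

Lemma prec_pairwise_Sseq n : pairwise prec (Sseq n).
Proof.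
rewrite /Sseq; set odds := [seq i <- _ | odd i]; set evens := [seq i <- _ | ~~ odd i].
have ltn_odds : pairwise ltn odds.
  by apply: pairwise_filter; rewrite -sorted_pairwise ?iota_ltn_sorted //; exact: ltn_trans.
have gtn_evens : pairwise (fun i j => j < i) evens.
  apply: pairwise_filter; rewrite pairwise_rev -sorted_pairwise ?iota_ltn_sorted //.
  exact: ltn_trans.
rewrite pairwise_cat; apply/and3P; split.
- apply/allrelP => y x /flattenP [_ /mapP [i + ->]] /[!mem_Rni] /andP[_ /eqP wy].
  move=> /[!mem_filter] /andP[oi _] /flattenP [_ /mapP [j + ->]].
  move=> /[!mem_filter] /andP[oj _] /[!mem_Sni] /andP[_ /eqP wx].
  by rewrite /prec /precw wy wx oi (negbTE oj).
- apply: pairwise_flatten_map.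
    move=> i; rewrite mem_filter => /andP[oi _]; rewrite /Rni pairwise_rev.
    apply: (@sub_in_pairwise _ (fun x : seq bool => weight x == i) lex_lt).
    + by move=> a b /eqP wa /eqP wb h; rewrite /prec /precw wa wb !eqxx oi ltnn.
    + by apply/allP => a; rewrite mem_Sni => /andP[].
    + exact: lex_lt_pairwise_Sni.
  apply: (@sub_in_pairwise _ (fun i => i \in odds) ltn _ _ _ _ ltn_odds); last exact/allP.
  move=> i j; rewrite !mem_filter => /andP[oi _] /andP[oj _] lij.
  apply/allrelP => y x; rewrite !mem_Rni => /andP[_ /eqP wy] /andP[_ /eqP wx].
  by rewrite /prec wy wx /precw oi oj (lij : i < j).
- apply: pairwise_flatten_map.
    move=> i; rewrite mem_filter => /andP[oi _].
    apply: (@sub_in_pairwise _ (fun x : seq bool => weight x == i) lex_lt).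
    + by move=> a b /eqP wa /eqP wb h; rewrite /prec /precw wa wb !eqxx (negbTE oi) ltnn.
    + by apply/allP => a; rewrite mem_Sni => /andP[].
    + exact: lex_lt_pairwise_Sni.
  apply: (@sub_in_pairwise _ (fun i => i \in evens) _ _ _ _ _ gtn_evens); last exact/allP.
  move=> i j; rewrite !mem_filter => /andP[oi _] /andP[oj _] lij.
  apply/allrelP => y x; rewrite !mem_Sni => /andP[_ /eqP wy] /andP[_ /eqP wx].
  by rewrite /prec wy wx /precw (negbTE oi) (negbTE oj) (lij : j < i).
Qed.

Lemma mem_Sseq n x : (x \in Sseq n) = (size x == n).
Proof.
rewrite /Sseq mem_cat; apply/idP/idP.
  by case/orP => /flattenP [_ /mapP [i _ ->]]; rewrite ?mem_Rni ?mem_Sni => /andP[].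
move=> hx; have hw : weight x < n.+1 by rewrite ltnS -(eqP hx) /weight count_size.
case ho: (odd (weight x)); apply/orP; [left|right]; apply/flattenP.
  exists (Rni n (weight x)); rewrite ?mem_Rni ?hx ?eqxx //.
  by apply/mapP; exists (weight x) => //; rewrite mem_filter mem_iota ho.
exists (Sni n (weight x)); rewrite ?mem_Sni ?hx ?eqxx //.
by apply/mapP; exists (weight x) => //; rewrite mem_filter mem_rev mem_iota ho.
Qed.

Lemma perm_Sseq_bitstrings n : perm_eq (Sseq n) (bitstrings n).
Proof.
apply: uniq_perm; first exact: (pairwise_uniq prec_irr (prec_pairwise_Sseq n)).
  exact: uniq_bitstrings.
by move=> x; rewrite mem_Sseq mem_bitstrings.
Qed.

(** * Counting predecessors *)

Definition rank N x := count (prec^~ x) (bitstrings N).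

Lemma fn_rank N x : size x = N -> fn N x = (rank N x).+1.
Proof.
move=> hx; rewrite /fn (index_pairwise prec_irr prec_asym (prec_pairwise_Sseq N)).
  by rewrite /rank; move/permP: (perm_Sseq_bitstrings N) => ->.
by rewrite mem_Sseq hx.
Qed.

Lemma rank_adj_le m z w : size z = m -> size w = m -> hc_adj z w ->
  (rank m z + rank m w).+2 <= str_Q m.
Proof.
move=> hz hw hzw; rewrite -addnS -addSn -(fn_rank hz) -(fn_rank hw) /str_Q /strength.
have hz' : z \in bitstrings m by rewrite mem_bitstrings hz.
have hw' : w \in bitstrings m by rewrite mem_bitstrings hw.
apply: leq_trans
  (@leq_bigmax_seq _ _ (hc_adj z) (fun v => fn m z + fn m v) w hw' hzw) _.
exact: (@leq_bigmax_seq _ _ xpredT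
  (fun u => \max_(v <- bitstrings m | hc_adj u v) (fn m u + fn m v)) z hz' isT).
Qed.

Ltac case_parity v := let h := fresh "p" in have h := modn2 v; case: (odd v) h => /= h.
Ltac case_comparisons := repeat match goal with
 | |- context [ (?a <= ?b)%N ] => let h := fresh "c" in case: (leqP a b) => h
 | |- context [ (?a == ?b) ] => let h := fresh "e" in case: (@eqP nat a b) => h
 end.
Ltac close_cases := try done; first [lia | exfalso; lia].

Definition count_weight N (p : pred nat) := count (fun y => p (weight y)) (bitstrings N).

Lemma count_weightS N p :
  count_weight N.+1 p = count_weight N p + count_weight N (fun v => p v.+1).
Proof. by rewrite /count_weight count_bitstringsS. Qed.

Lemma count_prec_rank N z : size z = N -> count (prec z) (bitstrings N) + rank N z + 1 = 2 ^ N.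
Proof.
move=> hz; rewrite /rank -count_predUI.
have -> : count (predI (prec z) (prec^~ z)) (bitstrings N) = 0.
  apply/eqP; rewrite -leqn0 leqNgt -has_count; apply/hasPn => y _ /=.
  by apply/negP => /andP[h1 h2]; move: (prec_asym h1); rewrite h2.
have -> : count (predU (prec z) (prec^~ z)) (bitstrings N) =
          count (predC (pred1 z)) (bitstrings N).
  apply: eq_in_count => y; rewrite mem_bitstrings => /eqP hy /=.
  case: (eqVneq y z) => [->|ne]; first by rewrite prec_irr.
  by rewrite orbC prec_total // hy hz.
rewrite addn0 -size_bitstrings -(count_predC (pred1 z)) addnC; congr (_ + _).
by rewrite count_uniq_mem ?uniq_bitstrings // mem_bitstrings hz eqxx.
Qed.

Lemma rank_false_cons M u :
  rank M.+1 (false :: u) = rank M u + count_weight M (fun v => precw v.+1 (weight u) false true).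
Proof. by rewrite /rank count_bitstringsS. Qed.

Lemma rank_true_cons M u : size u = M ->
  rank M.+1 (true :: u) + rank M u + 1 =
  2 ^ M + count_weight M (fun v => precw v (weight u).+1 true false).
Proof.
move=> hu; rewrite /rank count_bitstringsS -/(rank M u).
rewrite (eq_count (prec_true_true^~ u)) (eq_count (prec_false_true^~ u)).
by rewrite -(count_prec_rank hu) /count_weight; lia.
Qed.

Lemma precw_false_true v w : precw v.+1 w false true = ~~ precw v w.+1 true false.
Proof. rewrite /precw /=; case_parity v; case_parity w; case_comparisons; close_cases. Qed.

Definition flip_head (z : seq bool) := if z is c :: u then (~~ c) :: u else z.

Lemma size_flip_head z : size (flip_head z) = size z.
Proof. by case: z. Qed.

Lemma rank_flip_head m z : size z = m -> 0 < m -> rank m z + rank m (flip_head z) + 1 = 2 ^ m.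
Proof.
case: m => // M; case: z => // c u /= [hu] _.
suff : rank M.+1 (false :: u) + rank M.+1 (true :: u) + 1 = 2 ^ M.+1 by case: c => /=; lia.
have := rank_true_cons hu; rewrite rank_false_cons.
have : count_weight M (fun v => precw v.+1 (weight u) false true) +
       count_weight M (fun v => precw v (weight u).+1 true false) = 2 ^ M.
  rewrite /count_weight -size_bitstrings.
  rewrite -(count_predC (fun y => precw (weight y) (weight u).+1 true false)) addnC.
  by congr (_ + _); apply: eq_count => y /=; rewrite precw_false_true.
rewrite expnS; lia.
Qed.

Lemma count_prec_flip_head m z : size z = m -> 0 < m ->
  count (prec z) (bitstrings m) = rank m (flip_head z).
Proof. by move=> hz hm; have := rank_flip_head hz hm; have := count_prec_rank hz; lia. Qed.

(* For z of weight k, the predecessors of 11z (resp. 10z) that begin with 0 or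
   with 10 (resp. 11). *)
Definition rank_gain11 M k :=
  count_weight M.+1 (fun v => precw v k.+2 true false) +
  count_weight M (fun v => precw k.+1 v false true).

Definition rank_gain10 M k :=
  count_weight M.+1 (fun v => precw v k.+1 true false) +
  count_weight M (fun v => precw k v.+1 true false).

Lemma rank_true_true M z :
  rank M.+2 (true :: true :: z) = rank M z + rank_gain11 M (weight z).
Proof.
rewrite /rank count_bitstringsS (eq_count (prec_true_true^~ _)).
rewrite (eq_count (prec_false_true^~ _)) [count (prec _) _]count_bitstringsS.
rewrite (eq_count (prec_true_true _)) (eq_count (prec_true_false _)).
by rewrite /rank_gain11 /count_weight !weight_cons !add1n; lia.
Qed.

Lemma rank_true_false M z : size z = M -> 0 < M ->
  rank M.+2 (true :: false :: z) = rank M (flip_head z) + rank_gain10 M (weight z).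
Proof.
move=> hz hM; rewrite /rank count_bitstringsS (eq_count (prec_true_true^~ _)).
rewrite (eq_count (prec_false_true^~ _)) [count (prec _) _]count_bitstringsS.
rewrite (eq_count (prec_false_false _)) (eq_count (prec_false_true _)).
rewrite (count_prec_flip_head hz hM) -/(rank M (flip_head z)).
by rewrite /rank_gain10 /count_weight !weight_cons add0n; lia.
Qed.

(** * Weight-class sums *)

Local Open Scope ring_scope.

Definition sum_weight N (g : nat -> int) : int := \sum_(y <- bitstrings N) g (weight y).

Lemma count_weight_sum N p : Posz (count_weight N p) = sum_weight N (fun v => Posz (p v)).
Proof.
rewrite /count_weight /sum_weight; elim: (bitstrings N) => [|y s IH]; first by rewrite big_nil.
by rewrite big_cons /= PoszD IH.
Qed.

Lemma sum_weightD N f g : sum_weight N (fun v => f v + g v) = sum_weight N f + sum_weight N g.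
Proof. by rewrite /sum_weight big_split. Qed.

Lemma eq_sum_weight N f g : f =1 g -> sum_weight N f = sum_weight N g.
Proof. by move=> h; rewrite /sum_weight; apply: eq_bigr => y _; rewrite h. Qed.

Lemma sum_weightS N g : sum_weight N.+1 g = sum_weight N g + sum_weight N (fun v => g v.+1).
Proof. by rewrite /sum_weight /= big_cat !big_map. Qed.

Lemma sum_weightMl N c g : sum_weight N (fun v => c * g v) = c * sum_weight N g.
Proof. by rewrite /sum_weight mulr_sumr. Qed.

Lemma sum_weight_const N c : sum_weight N (fun _ => c) = c * (2 ^ N)%N.
Proof.
elim: N => [|N IH]; first by rewrite /sum_weight /= big_cons big_nil addr0 mulr1.
by rewrite sum_weightS IH expnS PoszM; nia.
Qed.

Lemma sum_weight_eq N j : sum_weight N (fun v => Posz (v == j)) = Posz 'C(N, j).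
Proof.
elim: N j => [|N IH] j; first by rewrite /sum_weight /= big_cons big_nil addr0; case: j.
rewrite sum_weightS IH; case: j => [|j].
  by rewrite (@eq_sum_weight _ _ (fun _ => 0)) // sum_weight_const mul0r addr0 !bin0.
by rewrite (@eq_sum_weight _ _ (fun v => Posz (v == j))) // IH binS PoszD addrC.
Qed.

Definition sgn (k : nat) : int := if odd k then -1 else 1.

Definition alt_prefix (k v : nat) : int := if (v <= k)%N then sgn v else 0.

Lemma alt_prefixS k v : alt_prefix k v + alt_prefix k v.+1 = sgn k * Posz (v == k).
Proof. rewrite /alt_prefix /sgn /=; case_parity v; case_parity k; case_comparisons; close_cases. Qed.

Lemma sum_weight_alt_prefix N k : sum_weight N.+1 (alt_prefix k) = sgn k * Posz 'C(N, k).
Proof.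
by rewrite sum_weightS -sum_weightD (eq_sum_weight _ (alt_prefixS k)) sum_weightMl sum_weight_eq.
Qed.

Local Close Scope ring_scope.

Lemma leq_bin_succ n j : j.*2 < n -> 'C(n, j) <= 'C(n, j.+1).
Proof.
move=> h; have h1 := mul_bin_diag n j; have h2 := mul_bin_down n j.
rewrite -muln2 in h; nia.
Qed.

Lemma leq_bin_half n i j : i <= j <= n./2 -> 'C(n, i) <= 'C(n, j).
Proof.
have hn := odd_double_half n; rewrite -muln2 in hn.
move=> /andP[hij hj]; have hi := leq_trans hij hj.
apply: (@homo_leq_in _ (fun k => k <= n./2) (binomial n) (fun a b => a <= b)
                     leqnn leq_trans) => // [a b _ hb k /andP[_ hk]|k _ hk].
  by move: hb; rewrite !unfold_in /=; lia.
by apply: leq_bin_succ; rewrite -muln2; move: hk; rewrite unfold_in /=; lia.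
Qed.

Lemma leq_bin_central n j : 'C(n, j) <= 'C(n, n./2).
Proof.
have hn := odd_double_half n; rewrite -muln2 in hn.
case: (leqP j n./2) => hj; first by apply: leq_bin_half; rewrite hj leqnn.
case: (leqP j n) => hjn; last by rewrite bin_small.
rewrite -bin_sub //; apply: leq_bin_half; apply/andP; split; lia.
Qed.

Lemma leq_bin_uphalf n j : 'C(n, j) <= 'C(n, uphalf n).
Proof.
have hn := odd_double_half n; rewrite -muln2 in hn.
rewrite uphalf_half; case: (boolP (odd n)) => hodd; last exact: leq_bin_central.
have -> : 1 + n./2 = n - n./2 by rewrite hodd /= in hn; lia.
by rewrite bin_sub ?leq_bin_central //; lia.
Qed.

Local Open Scope ring_scope.

Definition gain11_summand k v : int :=
  Posz (precw v k.+2 true false) + Posz (precw v.+1 k.+2 true false) +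
  Posz (precw k.+1 v false true).

Definition gain10_summand k v : int :=
  Posz (precw v k.+1 true false) + Posz (precw v.+1 k.+1 true false) +
  Posz (precw k v.+1 true false).

Lemma rank_gain11_sum M k : Posz (rank_gain11 M.+1 k) = sum_weight M.+1 (gain11_summand k).
Proof. by rewrite /rank_gain11 count_weightS !PoszD !count_weight_sum -!sum_weightD. Qed.

Lemma rank_gain10_sum M k : Posz (rank_gain10 M.+1 k) = sum_weight M.+1 (gain10_summand k).
Proof. by rewrite /rank_gain10 count_weightS !PoszD !count_weight_sum -!sum_weightD. Qed.

Lemma gain11_summand_pair k v :
  gain11_summand k v + gain11_summand k.+1 v = 3 + alt_prefix k v + sgn k * Posz (v == k.+1).
Proof.
rewrite /gain11_summand /alt_prefix /sgn /precw /=.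
case_parity v; case_parity k; case_comparisons; close_cases.
Qed.

Lemma gain10_summand_pair k v :
  gain10_summand k v + gain10_summand k.+1 v = 3 - alt_prefix k v - sgn k * Posz (v == k).
Proof.
rewrite /gain10_summand /alt_prefix /sgn /precw /=.
case_parity v; case_parity k; case_comparisons; close_cases.
Qed.

Lemma gain10_11_summand k v :
  gain10_summand k v + gain11_summand k v = 3 - sgn k * Posz (v == k).
Proof.
rewrite /gain10_summand /gain11_summand /sgn /precw /=.
case_parity v; case_parity k; case_comparisons; close_cases.
Qed.

Lemma rank_gain11_pair M k :
  Posz (rank_gain11 M.+1 k + rank_gain11 M.+1 k.+1) =
  3 * Posz (2 ^ M.+1) + sgn k * Posz 'C(M, k) + sgn k * Posz 'C(M.+1, k.+1).
Proof.
rewrite PoszD !rank_gain11_sum -sum_weightD (eq_sum_weight _ (gain11_summand_pair k)).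
rewrite !sum_weightD sum_weight_const sum_weight_alt_prefix sum_weightMl sum_weight_eq.
by rewrite mulrC; lia.
Qed.

Lemma rank_gain10_pair M k :
  Posz (rank_gain10 M.+1 k + rank_gain10 M.+1 k.+1) =
  3 * Posz (2 ^ M.+1) - sgn k * Posz 'C(M, k) - sgn k * Posz 'C(M.+1, k).
Proof.
rewrite PoszD !rank_gain10_sum -sum_weightD (eq_sum_weight _ (gain10_summand_pair k)).
rewrite (@eq_sum_weight _ _ (fun v => 3 + (-1) * alt_prefix k v + (- sgn k) * Posz (v == k)));
  last by move=> v; rewrite !mulN1r mulNr.
rewrite !sum_weightD sum_weight_const !sum_weightMl sum_weight_alt_prefix sum_weight_eq.
by rewrite mulrC; lia.
Qed.

Lemma rank_gain10_11 M k :
  Posz (rank_gain10 M.+1 k + rank_gain11 M.+1 k) = 3 * Posz (2 ^ M.+1) - sgn k * Posz 'C(M.+1, k).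
Proof.
rewrite PoszD rank_gain10_sum rank_gain11_sum -sum_weightD.
rewrite (eq_sum_weight _ (gain10_11_summand k)).
rewrite (@eq_sum_weight _ _ (fun v => 3 + (- sgn k) * Posz (v == k)));
  last by move=> v; rewrite mulNr.
by rewrite !sum_weightD sum_weight_const sum_weightMl sum_weight_eq mulrC; lia.
Qed.

Local Close Scope ring_scope.

Definition gain_bound M := 3 * 2 ^ M.+1 + 'C(M, uphalf M) + 'C(M.+1, uphalf M.+1).

Lemma rank_gain11_pair_le M k : rank_gain11 M.+1 k + rank_gain11 M.+1 k.+1 <= gain_bound M.
Proof.
have := rank_gain11_pair M k; have := leq_bin_uphalf M k; have := leq_bin_uphalf M.+1 k.+1.
by rewrite /gain_bound /sgn; case: (odd k); lia.
Qed.

Lemma rank_gain10_pair_le M k : rank_gain10 M.+1 k + rank_gain10 M.+1 k.+1 <= gain_bound M.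
Proof.
have := rank_gain10_pair M k; have := leq_bin_uphalf M k; have := leq_bin_uphalf M.+1 k.
by rewrite /gain_bound /sgn; case: (odd k); lia.
Qed.

Lemma rank_gain10_11_le M k : rank_gain10 M.+1 k + rank_gain11 M.+1 k <= gain_bound M.
Proof.
have := rank_gain10_11 M k; have := leq_bin_uphalf M.+1 k.
by rewrite /gain_bound /sgn; case: (odd k); lia.
Qed.

Definition hamming (x y : seq bool) := count id [seq p.1 != p.2 | p <- zip x y].

Lemma hc_adj_cons c d x y :
  hc_adj (c :: x) (d :: y) = (size x == size y) && ((c != d) + hamming x y == 1).
Proof. by []. Qed.

Lemma hamming_cons a b x y : hamming (a :: x) (b :: y) = (a != b) + hamming x y.
Proof. by []. Qed.

Lemma hamming_eq0 x y : size x = size y -> hamming x y = 0 -> x = y.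
Proof.
elim: x y => [|a x IH] [|b y] //= [] /IH {}IH.
by case: a; case: b => //= /IH ->.
Qed.

Lemma hamming_refl x : hamming x x = 0.
Proof. by elim: x => //= a x IH; rewrite /hamming /= eqxx -/(hamming x x) IH. Qed.

Lemma hc_adj_weight z w : hc_adj z w -> weight w = (weight z).+1 \/ weight z = (weight w).+1.
Proof.
elim: z w => [|c z IH] [|d w] //.
rewrite hc_adj_cons => /andP[/eqP hs]; rewrite !weight_cons.
case: c; case: d => /=.
- by rewrite add0n => h; case: (IH w); rewrite /hc_adj ?hs ?eqxx //= => ->; [left|right].
- by rewrite add1n eqSS => /eqP /(hamming_eq0 hs) ->; right.
- by rewrite add1n eqSS => /eqP /(hamming_eq0 hs) ->; left.
- by rewrite add0n => h; case: (IH w); rewrite /hc_adj ?hs ?eqxx //= => ->; [left|right].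
Qed.

Lemma hc_adj_flip_head x y : hc_adj x y -> hc_adj (flip_head x) (flip_head y).
Proof.
case: x => [|c x]; case: y => [|d y] //.
by rewrite /= !hc_adj_cons; case: c; case: d.
Qed.

Lemma hc_adj_flip_head_self z : 0 < size z -> hc_adj z (flip_head z).
Proof. by case: z => // c u _; rewrite /= hc_adj_cons eqxx hamming_refl; case: c. Qed.

Section TwoLeadingBits.

Variable M : nat.

Lemma rank_true_true_adj_le z w : size z = M.+1 -> size w = M.+1 -> hc_adj z w ->
  (rank M.+3 (true :: true :: z) + rank M.+3 (true :: true :: w)).+2
  <= str_Q M.+1 + gain_bound M.
Proof.
move=> hz hw hzw; rewrite !rank_true_true.
have := rank_adj_le hz hw hzw.
by case: (hc_adj_weight hzw) => ->;
  [have := rank_gain11_pair_le M (weight z) | have := rank_gain11_pair_le M (weight w)]; lia.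
Qed.

Lemma rank_true_false_adj_le z w : size z = M.+1 -> size w = M.+1 -> hc_adj z w ->
  (rank M.+3 (true :: false :: z) + rank M.+3 (true :: false :: w)).+2
  <= str_Q M.+1 + gain_bound M.
Proof.
move=> hz hw hzw; rewrite !rank_true_false //.
have := rank_adj_le (etrans (size_flip_head z) hz) (etrans (size_flip_head w) hw)
                    (hc_adj_flip_head hzw).
by case: (hc_adj_weight hzw) => ->;
  [have := rank_gain10_pair_le M (weight z) | have := rank_gain10_pair_le M (weight w)]; lia.
Qed.

Lemma rank_true_true_false_le z : size z = M.+1 ->
  (rank M.+3 (true :: true :: z) + rank M.+3 (true :: false :: z)).+2
  <= str_Q M.+1 + gain_bound M.
Proof.
move=> hz; rewrite rank_true_true rank_true_false //.
have hz0 : 0 < size z by rewrite hz.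
have := rank_adj_le hz (etrans (size_flip_head z) hz) (hc_adj_flip_head_self hz0).
by have := rank_gain10_11_le M (weight z); lia.
Qed.

Lemma rank_head_true_adj_le x y : size x = M.+3 -> size y = M.+3 -> hc_adj x y ->
  head false x -> head false y ->
  (rank M.+3 x + rank M.+3 y).+2 <= str_Q M.+1 + gain_bound M.
Proof.
case: x => [|[] [|a z]] //; case: y => [|[] [|b w]] //= [hz] [hw] + _ _.
rewrite hc_adj_cons hamming_cons /= ?eqSS hz hw eqxx /= add0n.
case: a; case: b => /=; rewrite ?add0n ?add1n ?eqSS.
- by move=> hzw; apply: rank_true_true_adj_le; rewrite // /hc_adj hz hw eqxx.
- by move=> /eqP /(hamming_eq0 (etrans hz (esym hw))) <-; apply: rank_true_true_false_le.
- move=> /eqP /(hamming_eq0 (etrans hz (esym hw))) <-.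
  by rewrite [rank _ _ + _]addnC; apply: rank_true_true_false_le.
- by move=> hzw; apply: rank_true_false_adj_le; rewrite // /hc_adj hz hw eqxx.
Qed.

End TwoLeadingBits.

Theorem theorem2p5 (n : nat) (x y : seq bool) :
  5 <= n -> odd n ->
  size x = n -> size y = n -> hc_adj x y ->
  fn n x + fn n y = str_Q n ->
  head false x = true -> head false y = true ->
  str_Q n <= str_Q (n - 2) + 3 * 2 ^ (n - 2)
             + 'C(n - 3, uphalf (n - 3)) + 'C(n - 2, uphalf (n - 2)).
Proof.
move=> n_ge5 _ hx hy hxy hstr hx1 hy1.
have [M defn] : exists M, n = M.+3 by exists (n - 3); lia.
rewrite {}defn in hx hy hstr *; rewrite -hstr (fn_rank hx) (fn_rank hy) !subSS !subn0.
have := rank_head_true_adj_le hx hy hxy hx1 hy1.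
by rewrite /gain_bound; lia.
Qed.
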